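(* Let $n\ge1$. If $\{H_1,H_2\}$ is a Hamilton decomposition of $G_{n,2}$ and $\{E_1,\dots,E_n\}$ is a Hamilton decomposition of $Q_{2n}$ (each $E_i$ taken as a directed Hamilton cycle starting at $\mathbf 0$), then $\{f(E_i,H_j): 1\le i\le n,\ 1\le j\le 2\}$ is a Hamilton decomposition of $Q_{4n}$.
   Context: A Hamilton decomposition of a graph is a partition of its edge set into edge-disjoint Hamilton cycles. The hypercube $Q_{2n}$ is realized as the graph whose vertices are the quaternary strings $q_1\cdots q_n$, $q_i\in\{0,1,2,3\}$, adjacent iff they differ in exactly one position and there by $\pm1\pmod 4$; $\mathbf 0=0\cdots0$. $G_{n,k}=C_{4^n}\Box\cdots\Box C_{4^n}$ ($k$ factors) has vertex set $(\mathbb Z/4^n\mathbb Z)^k$, vertices adjacent iff they differ in exactly one coordinate and there by $\pm1\pmod{4^n}$. For a directed Hamilton cycle $E$ of $Q_{2n}$ listing vertices $e_0=\mathbf 0,e_1,\dots,e_{4^n-1}$, put $\pi_E(e_p)=p$. Identify $V(Q_{4n})$ with pairs $(u,w)$ of quaternary strings of length $n$ ($Q_{4n}=Q_{2n}\Box Q_{2n}$), and let $\Phi_E(u,w)=(\pi_E(u),\pi_E(w))\in V(G_{n,2})$; $\Phi_E^{-1}$ maps edges of $G_{n,2}$ to edges of $Q_{4n}$. For a Hamilton cycle $H$ of $G_{n,2}$, $f(E,H):=\Phi_E^{-1}(H)$. *)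

From mathcomp Require Import all_boot.
Set Implicit Arguments. Unset Strict Implicit. Unset Printing Implicit Defensive.

Section Graph.
Variable T : finType.
Variable adj : rel T.

Definition edge_set : {set {set T}} :=
  [set e : {set T} | [exists x, exists y, adj x y && (e == [set x; y])]].

Definition is_ham_cycle (c : seq T) : bool :=
  [&& uniq c, size c == #|T| & cycle adj c].

Definition cycle_edges (c : seq T) : {set {set T}} :=
  [set [set x; next c x] | x in c].

Definition ham_decomp (I : finType) (C : I -> seq T) : Prop :=
  [/\ forall i, is_ham_cycle (C i),
      forall i j, i != j -> [disjoint cycle_edges (C i) & cycle_edges (C j)]
    & \bigcup_(i in I) cycle_edges (C i) = edge_set].
End Graph.

(** * The hypercube Q_{2n} as quaternary strings of length n *)
Definition qstr (n : nat) := {ffun 'I_n -> 'I_4}.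

Definition qzero (n : nat) : qstr n := [ffun => ord0].

Definition cadj (m a b : nat) : bool := (b == (a + 1) %% m) || (a == (b + 1) %% m).

Definition qadj (n : nat) : rel (qstr n) := fun u v =>
  [exists i : 'I_n, [forall j : 'I_n, (j != i) ==> (u j == v j)]
                    && cadj 4 (u i) (v i)].

(** * The torus G_{n,2} = C_{4^n} [] C_{4^n} *)
Definition gvert (n : nat) := ('I_(4 ^ n) * 'I_(4 ^ n))%type.

Definition gadj (n : nat) : rel (gvert n) := fun x y =>
  ((x.1 == y.1) && cadj (4 ^ n) x.2 y.2) || ((x.2 == y.2) && cadj (4 ^ n) x.1 y.1).

(** * Q_{4n} = Q_{2n} [] Q_{2n}: a pair (u,w) is the length-2n string u w *)
Definition qcat (n : nat) (u w : qstr n) : qstr (n + n) :=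
  [ffun i => match split i with inl j => u j | inr j => w j end].

(* Phi_E^{-1}(p,q) = (e_p, e_q) where E = e_0 e_1 ... e_{4^n-1} *)
Definition Phi_inv (n : nat) (E : seq (qstr n)) (x : gvert n) : qstr (n + n) :=
  qcat (nth (qzero n) E x.1) (nth (qzero n) E x.2).

Definition fEH (n : nat) (E : seq (qstr n)) (H : seq (gvert n)) : seq (qstr (n + n)) :=
  map (Phi_inv E) H.

(* Write Q_{4n} = Q_{2n} [] Q_{2n}: a vertex is a concatenation qcat a b, and an
   edge moves exactly one half along an edge of Q_{2n}.  For a set S of edges of
   Q_{2n}, lift_edges S is the set of edges of Q_{4n} moving one half along an
   edge of S; then the edges of Q_{4n} are the lift of the edges of Q_{2n}, and
   lift_edges commutes with unions and preserves disjointness.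

   For a Hamilton cycle E = e_0 ... e_{4^n-1} of Q_{2n}, Phi_E^{-1}(p,q) = (e_p,e_q)
   is a bijective graph homomorphism G_{n,2} -> Q_{4n}, and the image of all the
   edges of G_{n,2} is exactly lift_edges (edges of E).  Hence each f(E_i,H_j) is
   a Hamilton cycle; for a fixed i the images of H_1, H_2 are disjoint (Phi is
   injective) and cover lift_edges E_i; distinct i give disjoint lifts because the
   E_i are edge-disjoint; and the union over i is the lift of all edges of
   Q_{2n}, i.e. all edges of Q_{4n}. *)
From mathcomp Require Import all_boot zify.
Set Implicit Arguments. Unset Strict Implicit. Unset Printing Implicit Defensive.

Definition edge_image (T U : finType) (f : T -> U) (S : {set {set T}}) :
  {set {set U}} := [set f @: A | A : {set T} in S].

Lemma imset_set2 (T U : finType) (f : T -> U) x y :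
  f @: [set x; y] = [set f x; f y].
Proof. by rewrite imsetU !imset_set1. Qed.

Lemma edge_image_bigcup (T U I : finType) (f : T -> U) (S : I -> {set {set T}}) :
  edge_image f (\bigcup_(i in I) S i) = \bigcup_(i in I) edge_image f (S i).
Proof. by apply: big_morph => [A B|]; rewrite /edge_image ?imsetU ?imset0. Qed.

Lemma cycle_edges_map (T U : finType) (f : T -> U) (c : seq T) :
  injective f -> uniq c -> cycle_edges (map f c) = edge_image f (cycle_edges c).
Proof.
move=> injf uc; apply/setP => e; apply/imsetP/imsetP.
- case=> _ /mapP [x xc ->] ->; exists [set x; next c x]; first exact: imset_f.
  by rewrite imset_set2 next_map.
- case=> _ /imsetP [x xc ->] ->; exists (f x); first exact: map_f.
  by rewrite imset_set2 next_map.
Qed.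

Lemma ham_cycle_map (T U : finType) (adjT : rel T) (adjU : rel U) (f : T -> U) c :
  injective f -> #|T| = #|U| -> {homo f : x y / adjT x y >-> adjU x y} ->
  is_ham_cycle adjT c -> is_ham_cycle adjU (map f c).
Proof.
move=> injf cardTU homf /and3P [uc /eqP sc cc].
rewrite /is_ham_cycle (map_inj_uniq injf) size_map sc cardTU eqxx uc cycle_map.
by apply: sub_cycle cc => x y /homf.
Qed.

Lemma edge_setP (T : finType) (adj : rel T) e :
  reflect (exists x y, adj x y /\ e = [set x; y]) (e \in edge_set adj).
Proof.
rewrite inE; apply: (iffP existsP) => [[x /existsP [y /andP [xy /eqP ->]]] | [x [y [xy ->]]]].
- by exists x, y.
- by exists x; apply/existsP; exists y; rewrite xy eqxx.
Qed.

Lemma edge_set_card (T : finType) (adj : rel T) A :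
  irreflexive adj -> A \in edge_set adj -> 1 < #|A|.
Proof.
move=> irr /edge_setP [x [y [xy ->]]].
by rewrite cards2 ltnS lt0b; apply: contraTneq xy => ->; rewrite irr.
Qed.

Lemma cadj_sym m a b : cadj m a b = cadj m b a.
Proof. by rewrite /cadj orbC. Qed.

Lemma cadj_irr m a : 1 < m -> a < m -> cadj m a a = false.
Proof.
move=> m_gt1 a_lt; rewrite /cadj orbb; apply/negbTE/eqP.
case: (ltnP (a + 1) m) => h; first by rewrite modn_small //; lia.
have -> : a + 1 = m by lia.
by rewrite modnn; lia.
Qed.

Lemma qadj_sym n : symmetric (@qadj n).
Proof.
suff qadjW (u v : qstr n) : qadj u v -> qadj v u by move=> u v; apply/idP/idP => /qadjW.
case/existsP => i /andP [/forallP same c]; apply/existsP; exists i.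
rewrite cadj_sym c andbT; apply/forallP => j; apply/implyP => ji.
by rewrite eq_sym (implyP (same j) ji).
Qed.

Lemma qadj_irr n : irreflexive (@qadj n).
Proof. by move=> u; apply/negbTE/existsP => -[i /andP [_]]; rewrite cadj_irr. Qed.

(** * The product structure Q_{4n} = Q_{2n} [] Q_{2n} *)

Section Product.
Variable n : nat.
Implicit Types a b : qstr n.

Lemma qcatL a b j : qcat a b (lshift n j) = a j.
Proof. by rewrite /qcat ffunE (unsplitK (inl _ j)). Qed.

Lemma qcatR a b j : qcat a b (rshift n j) = b j.
Proof. by rewrite /qcat ffunE (unsplitK (inr _ j)). Qed.

Lemma qcat_inj a b a' b' : qcat a b = qcat a' b' -> a = a' /\ b = b'.
Proof.
move=> e; split; apply/ffunP => j.
- by rewrite -(qcatL a b) -(qcatL a' b') e.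
- by rewrite -(qcatR a b) -(qcatR a' b') e.
Qed.

Lemma qcatl_inj b : injective (fun x => qcat x b).
Proof. by move=> a a' /qcat_inj []. Qed.

Lemma qcatr_inj a : injective (qcat a).
Proof. by move=> b b' /qcat_inj []. Qed.

Lemma qcat_surj (u : qstr (n + n)) : exists a b, u = qcat a b.
Proof.
exists [ffun j => u (lshift n j)], [ffun j => u (rshift n j)].
by apply/ffunP => i; rewrite /qcat ffunE; case: split_ordP => j ->; rewrite ffunE.
Qed.

Lemma qadj_qcat a b a' b' :
  qadj (qcat a b) (qcat a' b') = (b == b') && qadj a a' || (a == a') && qadj b b'.
Proof.
apply/existsP/orP.
- case=> i /andP [/forallP same c]; case: (split_ordP i) => k ->{i} in same c *.
  + left; apply/andP; split.
      apply/eqP/ffunP => j; rewrite -(qcatR a b) -(qcatR a' b').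
      by apply/eqP/(implyP (same _)); rewrite eq_shift.
    apply/existsP; exists k; rewrite -(qcatL a b) -(qcatL a' b') c andbT.
    apply/forallP => j; apply/implyP => jk; rewrite -(qcatL a b) -(qcatL a' b').
    by apply: (implyP (same _)); rewrite eq_shift.
  + right; apply/andP; split.
      apply/eqP/ffunP => j; rewrite -(qcatL a b) -(qcatL a' b').
      by apply/eqP/(implyP (same _)); rewrite eq_shift.
    apply/existsP; exists k; rewrite -(qcatR a b) -(qcatR a' b') c andbT.
    apply/forallP => j; apply/implyP => jk; rewrite -(qcatR a b) -(qcatR a' b').
    by apply: (implyP (same _)); rewrite eq_shift.
- case=> /andP [/eqP <- /existsP [k /andP [/forallP same c]]];
    [exists (lshift n k) | exists (rshift n k)];
    rewrite ?qcatL ?qcatR c andbT; apply/forallP => j; apply/implyP;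
    case: (split_ordP j) => l ->; rewrite ?qcatL ?qcatR ?eq_shift //;
    exact: (implyP (same l)).
Qed.
End Product.

(** * Lifting edges of Q_{2n} to Q_{4n} *)

Section Lift.
Variable n : nat.
Implicit Types (a b : qstr n) (A : {set qstr n}) (S : {set {set qstr n}}).

Definition lift_edges S : {set {set qstr (n + n)}} :=
  \bigcup_(b : qstr n) (edge_image (fun x => qcat x b) S :|: edge_image (qcat b) S).

Lemma lift_edgesP S e :
  reflect (exists b, exists2 A, A \in S & e = (fun x => qcat x b) @: A \/ e = qcat b @: A)
          (e \in lift_edges S).
Proof.
apply: (iffP bigcupP) => [[b _ /setUP [] /imsetP [A AS ->]] | [b [A AS [] ->]]].
- by exists b, A; [|left].
- by exists b, A; [|right].
- by exists b => //; apply/setUP; left; apply: imset_f.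
- by exists b => //; apply/setUP; right; apply: imset_f.
Qed.

Lemma lift_edges_bigcup (I : finType) (S : I -> {set {set qstr n}}) :
  lift_edges (\bigcup_(i in I) S i) = \bigcup_(i in I) lift_edges (S i).
Proof.
rewrite /lift_edges [RHS]exchange_big; apply: eq_bigr => b _.
by rewrite !edge_image_bigcup big_split.
Qed.

Lemma lift_left_inj b b' A A' :
  A != set0 -> (fun x => qcat x b) @: A = (fun x => qcat x b') @: A' -> A = A'.
Proof.
case/set0Pn => a aA e; have : qcat a b \in (fun x => qcat x b') @: A' by rewrite -e; apply: imset_f.
case/imsetP => a' _ /qcat_inj [_ eb]; rewrite -eb in e.
by move: e; apply: imset_inj; apply: qcatl_inj.
Qed.

Lemma lift_right_inj b b' A A' :
  A != set0 -> qcat b @: A = qcat b' @: A' -> A = A'.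
Proof.
case/set0Pn => a aA e; have : qcat b a \in qcat b' @: A' by rewrite -e; apply: imset_f.
case/imsetP => a' _ /qcat_inj [eb _]; rewrite -eb in e.
by move: e; apply: imset_inj; apply: qcatr_inj.
Qed.

Lemma lift_mixed_card b b' A A' :
  (fun x => qcat x b) @: A = qcat b' @: A' -> #|(fun x => qcat x b) @: A| <= 1.
Proof.
move=> e; suff /subset_leq_card : (fun x => qcat x b) @: A \subset [set qcat b' b].
  by rewrite cards1.
apply/subsetP => _ /imsetP [a aA ->].
have : qcat a b \in qcat b' @: A' by rewrite -e; apply: imset_f.
by case/imsetP => a' _ /qcat_inj [-> ->]; rewrite inE.
Qed.

Lemma lift_edges_disjoint S S' :
  {in S, forall A, 1 < #|A|} -> [disjoint S & S'] -> [disjoint lift_edges S & lift_edges S'].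
Proof.
move=> proper disj; rewrite -setI_eq0; apply/eqP/setP => e; rewrite !inE.
apply/andP => -[/lift_edgesP [b [A AS eA]] /lift_edgesP [b' [A' AS' eA']]].
have A_gt1 := proper A AS; have A_gt0 : A != set0 by rewrite -card_gt0 ltnW.
have AS'F : A \in S' = false by apply: (disjointFr disj).
case: eA eA' => -> [] eA'.
- by rewrite (lift_left_inj A_gt0 eA') AS' in AS'F.
- have := lift_mixed_card eA'; rewrite card_imset; last exact: qcatl_inj.
  by rewrite leqNgt A_gt1.
- have := lift_mixed_card (esym eA'); rewrite -eA' card_imset; last exact: qcatr_inj.
  by rewrite leqNgt A_gt1.
- by rewrite (lift_right_inj A_gt0 eA') AS' in AS'F.
Qed.

Lemma edge_set_qcat : edge_set (@qadj (n + n)) = lift_edges (edge_set (@qadj n)).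
Proof.
apply/setP => e; apply/idP/lift_edgesP.
- case/edge_setP => u [v [+ ->]].
  have [a [b ->]] := qcat_surj u; have [a' [b' ->]] := qcat_surj v.
  rewrite qadj_qcat => /orP [] /andP [/eqP <- adj_a].
  + by exists b, [set a; a']; [apply/edge_setP; exists a, a' | left; rewrite imset_set2].
  + by exists a, [set b; b']; [apply/edge_setP; exists b, b' | right; rewrite imset_set2].
- case=> b [_ /edge_setP [a [a' [adj_a ->]]] [] ->]; apply/edge_setP; rewrite imset_set2.
  + by exists (qcat a b), (qcat a' b); rewrite qadj_qcat eqxx adj_a.
  + by exists (qcat b a), (qcat b a'); rewrite qadj_qcat eqxx adj_a orbT.
Qed.
End Lift.

(** * The map Phi_E^{-1} : G_{n,2} -> Q_{4n} for a Hamilton cycle E of Q_{2n} *)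

Lemma next_nth_mod (T : eqType) (x0 : T) s i : uniq s -> i < size s ->
  next s (nth x0 s i) = nth x0 s ((i + 1) %% size s).
Proof.
move=> us i_lt; rewrite next_nth mem_nth //.
case: s us i_lt => [//|y p] us i_lt; rewrite index_uniq //=; move: i_lt => /= i_lt.
case: (ltnP i (size p)) => i_lt'.
  by rewrite modn_small ?addn1 /= ?(set_nth_default x0) //; lia.
have -> : i = size p by lia.
by rewrite addn1 modnn nth_default.
Qed.

Section Torus.
Variables (n : nat) (E : seq (qstr n)).
Hypothesis hamE : is_ham_cycle (@qadj n) E.
Local Notation e_ p := (nth (qzero n) E p).

Lemma size_E : size E = 4 ^ n.
Proof. by case/and3P: hamE => _ /eqP -> _; rewrite card_ffun !card_ord. Qed.

Lemma nth_surj x : exists p : 'I_(4 ^ n), e_ p = x.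
Proof.
case/and3P: hamE => uE /eqP sE _.
have xE : x \in E by rewrite -(card_uniqP uE) in sE; rewrite (subset_cardP sE (subset_predT _)).
have p_lt : index x E < 4 ^ n by rewrite -size_E index_mem.
by exists (Ordinal p_lt); rewrite nth_index.
Qed.

Lemma nth_succ p q : p < 4 ^ n -> q == (p + 1) %% 4 ^ n -> e_ q = next E (e_ p).
Proof. by case/and3P: hamE => uE _ _ p_lt /eqP ->; rewrite next_nth_mod ?size_E. Qed.

Lemma nth_next (p : 'I_(4 ^ n)) : exists2 q : 'I_(4 ^ n), cadj (4 ^ n) p q & e_ q = next E (e_ p).
Proof.
have q_lt : (p + 1) %% 4 ^ n < 4 ^ n by rewrite ltn_mod expn_gt0.
by exists (Ordinal q_lt); rewrite ?/cadj ?eqxx // (nth_succ (ltn_ord p)).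
Qed.

Lemma nth_cycle_edge p q : p < 4 ^ n -> q < 4 ^ n -> cadj (4 ^ n) p q ->
  [set e_ p; e_ q] \in cycle_edges E.
Proof.
move=> p_lt q_lt /orP [] succ.
- by rewrite (nth_succ p_lt succ); apply: imset_f; rewrite mem_nth ?size_E.
- by rewrite setUC (nth_succ q_lt succ); apply: imset_f; rewrite mem_nth ?size_E.
Qed.

Lemma nth_adj p q : p < 4 ^ n -> q < 4 ^ n -> cadj (4 ^ n) p q -> qadj (e_ p) (e_ q).
Proof.
have adj_next x : x \in E -> qadj x (next E x) by case/and3P: hamE => _ _; apply: next_cycle.
move=> p_lt q_lt /orP [] succ.
- by rewrite (nth_succ p_lt succ) adj_next // mem_nth ?size_E.
- by rewrite qadj_sym (nth_succ q_lt succ) adj_next // mem_nth ?size_E.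
Qed.

(* E is duplicate-free, so Phi_E^{-1} is injective *)
Lemma Phi_inj : injective (Phi_inv E).
Proof.
have nth_inj (p q : 'I_(4 ^ n)) : e_ p = e_ q -> p = q.
  case/and3P: hamE => uE _ _ /eqP; rewrite nth_uniq ?size_E // => /eqP; exact: val_inj.
by case=> [p q] [p' q'] /qcat_inj [/= /nth_inj -> /nth_inj ->].
Qed.

Lemma Phi_adj : {homo Phi_inv E : x y / gadj x y >-> qadj x y}.
Proof.
case=> [p q] [p' q']; rewrite /gadj /Phi_inv /= => /orP [] /andP [/eqP <- adj_p].
- by rewrite qadj_qcat eqxx (nth_adj (ltn_ord q) (ltn_ord q') adj_p) orbT.
- by rewrite qadj_qcat eqxx (nth_adj (ltn_ord p) (ltn_ord p') adj_p).
Qed.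

Lemma Phi_edges : edge_image (Phi_inv E) (edge_set (@gadj n)) = lift_edges (cycle_edges E).
Proof.
apply/setP => e; apply/imsetP/lift_edgesP.
- case=> _ /edge_setP [[p q] [[p' q'] [+ ->]]] ->.
  rewrite imset_set2 /gadj /Phi_inv /= => /orP [] /andP [/eqP <- adj_p].
  + by exists (e_ p), [set e_ q; e_ q']; [apply: nth_cycle_edge | right; rewrite imset_set2].
  + by exists (e_ q), [set e_ p; e_ p']; [apply: nth_cycle_edge | left; rewrite imset_set2].
- case=> b [_ /imsetP [x _ ->]]; have [r <-] := nth_surj b; have [p <-] := nth_surj x.
  have [p' adj_p <-] := nth_next p.
  case=> ->.
  + exists [set (p, r); (p', r)]; last by rewrite !imset_set2.
    by apply/edge_setP; exists (p, r), (p', r); rewrite /gadj /= eqxx adj_p orbT.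
  + exists [set (r, p); (r, p')]; last by rewrite !imset_set2.
    by apply/edge_setP; exists (r, p), (r, p'); rewrite /gadj /= eqxx adj_p.
Qed.
End Torus.

Theorem corollary1 (n : nat) (Hn : 0 < n)
  (H : 'I_2 -> seq (gvert n)) (E : 'I_n -> seq (qstr n)) :
  ham_decomp (@gadj n) H ->
  ham_decomp (@qadj n) E ->
  (forall i, head (qzero n) (E i) = qzero n) ->
  ham_decomp (@qadj (n + n)) (fun ij : 'I_n * 'I_2 => fEH (E ij.1) (H ij.2)).
Proof.
move=> [hamH disjH unH] [hamE disjE unE] _.
have edgesF i j :
    cycle_edges (fEH (E i) (H j)) = edge_image (Phi_inv (E i)) (cycle_edges (H j)).
  by apply: cycle_edges_map (Phi_inj (hamE i)) _; case/and3P: (hamH j).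
have in_lift i j : cycle_edges (fEH (E i) (H j)) \subset lift_edges (cycle_edges (E i)).
  by rewrite edgesF -(Phi_edges (hamE i)) -unH; apply/imsetS/bigcup_sup.
split.
(* each f(E_i,H_j) is the image of a Hamilton cycle by a bijective homomorphism *)
- case=> i j; apply: ham_cycle_map (Phi_inj (hamE i)) _ (Phi_adj (hamE i)) (hamH j).
  by rewrite !card_prod card_ffun !card_ord expnD.
(* same i: Phi is injective; different i: the lifts of the E_i are disjoint *)
- case=> i j [i' j'] /= ne; have [ei | ne_i] := eqVneq i i'.
  + rewrite -ei in ne *; rewrite !edgesF imset_disjoint; last exact/imset_inj/Phi_inj/hamE.
    by apply: disjH; apply: contraNneq ne => ->.
  + apply: disjointW (in_lift i j) (in_lift i' j') _.
    apply: lift_edges_disjoint (disjE _ _ ne_i) => A A_Ei.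
    apply: (edge_set_card (@qadj_irr n)); rewrite -unE.
    exact: (subsetP (bigcup_sup _ _)) A_Ei.
(* all edges: lift of (union of the E_i) = union over i of Phi_i (union of the H_j) *)
- rewrite edge_set_qcat -unE lift_edges_bigcup.
  under [RHS]eq_bigr => i _ do rewrite -(Phi_edges (hamE i)) -unH edge_image_bigcup.
  rewrite pair_big; apply: eq_big => -[i j] //= _; exact: edgesF.
Qed.
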